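(* Let $\mathcal A\subset\mathbb R^d$ be finite and nonempty, $\mathcal D=\mathrm{conv}(\mathcal A)$, and let $f$ be convex and differentiable on an open set containing $\mathcal D$ and $\mu$-strongly convex on $\mathcal D$ with respect to the Euclidean norm, $\mu\ge0$ (i.e. $f(y)-f(x)-\langle\nabla f(x),y-x\rangle\ge\frac\mu2\|y-x\|^2$ for all $x,y\in\mathcal D$). Then $\mu_f^{A}\ge\mu\cdot\mathrm{PWidth}(\mathcal A)^2$.
   Context: Euclidean norm and inner product. For a finite $\mathcal B\subseteq\mathbb R^d$ and $x\in\mathrm{conv}(\mathcal B)$, $\mathcal S_x(\mathcal B)$ is the family of subsets $S\subseteq\mathcal B$ such that $x$ is a proper convex combination of all elements of $S$ (all coefficients positive); write $\mathcal S_x=\mathcal S_x(\mathcal A)$. For $r\ne0$, $\mathrm{PdirW}(\mathcal B,r,x):=\min_{S\in\mathcal S_x(\mathcal B)}\max_{s\in\mathcal B,\,v\in S}\langle r/\|r\|,s-v\rangle$, and $\mathrm{PWidth}(\mathcal A):=\inf\{\mathrm{PdirW}(\mathcal K\cap\mathcal A,r,x)\}$ over all nonempty faces $\mathcal K$ of $\mathrm{conv}(\mathcal A)$ (including itself), $x\in\mathcal K$, $r\in\mathrm{cone}(\mathcal K-x)\setminus\{0\}$. For $x\in\mathcal D$: $s_f(x)\in\arg\min_{a\in\mathcal A}\langle\nabla f(x),a\rangle$; for $S\in\mathcal S_x$, $v_S(x)\in\arg\max_{v\in S}\langle\nabla f(x),v\rangle$; $v_f(x)$ is an element of $\{v_S(x):S\in\mathcal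 S_x\}$ minimizing $\langle\nabla f(x),\cdot\rangle$. For $x,x^*\in\mathcal D$ with $\langle\nabla f(x),x^*-x\rangle<0$, $\gamma^{A}(x,x^* ):=\frac{\langle-\nabla f(x),x^*-x\rangle}{\langle-\nabla f(x),s_f(x)-v_f(x)\rangle}$, and $\mu_f^{A}:=\inf_{x\in\mathcal D}\inf_{x^*\in\mathcal D:\langle\nabla f(x),x^*-x\rangle<0}\frac{2}{\gamma^{A}(x,x^* )^2}\big(f(x^* )-f(x)-\langle\nabla f(x),x^*-x\rangle\big)$ (an infimum over the empty set is $+\infty$). *)

(* classical reals.  Points of R^d are represented as
   functions nat -> R whose coordinates of index >= d vanish (predicate inRd);
   all inner products / norms only use the coordinates 0..d-1. *)
From Stdlib Require Import Reals Lra List.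
Import ListNotations.
Open Scope R_scope.

Definition vec := nat -> R.

Definition inRd (d : nat) (v : vec) : Prop := forall i, (d <= i)%nat -> v i = 0.

Definition dot (d : nat) (u v : vec) : R :=
  fold_right Rplus 0 (map (fun i => u i * v i) (seq 0 d)).
Definition norm (d : nat) (v : vec) : R := sqrt (dot d v v).

Definition vadd (u v : vec) : vec := fun i => u i + v i.
Definition vsub (u v : vec) : vec := fun i => u i - v i.
Definition vscale (c : R) (v : vec) : vec := fun i => c * v i.
Definition vopp (v : vec) : vec := fun i => - v i.

Definition csum (l : list vec) (c : vec -> R) : R := fold_right Rplus 0 (map c l).
Definition lsum (l : list vec) (c : vec -> R) : vec :=
  fun i => fold_right Rplus 0 (map (fun a => c a * a i) l).

Definition in_conv (A : list vec) (x : vec) : Prop :=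
  exists c : vec -> R, (forall a, In a A -> 0 <= c a) /\ csum A c = 1 /\
    forall i, x i = lsum A c i.

Definition proper_conv_comb (S : list vec) (x : vec) : Prop :=
  NoDup S /\ exists c : vec -> R, (forall s, In s S -> 0 < c s) /\ csum S c = 1 /\
    forall i, x i = lsum S c i.

Definition Sx (B : vec -> Prop) (x : vec) (S : list vec) : Prop :=
  (forall s, In s S -> B s) /\ proper_conv_comb S x.

Definition convex_set (C : vec -> Prop) : Prop :=
  forall x y t, C x -> C y -> 0 <= t <= 1 -> C (vadd (vscale t x) (vscale (1 - t) y)).

Definition face (C K : vec -> Prop) : Prop :=
  (forall y, K y -> C y) /\ convex_set K /\
  forall x y t, C x -> C y -> 0 < t < 1 ->
    K (vadd (vscale t x) (vscale (1 - t) y)) -> K x /\ K y.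

Definition in_cone (K : vec -> Prop) (x r : vec) : Prop :=
  exists (ks : list vec) (c : vec -> R),
    (forall k, In k ks -> K k /\ 0 <= c k) /\
    forall i, r i = fold_right Rplus 0 (map (fun k => c k * (k i - x i)) ks).

Definition nonzero (d : nat) (r : vec) : Prop := exists i, (i < d)%nat /\ r i <> 0.

Definition is_max_of (P : R -> Prop) (m : R) : Prop := P m /\ forall y, P y -> y <= m.
Definition is_min_of (P : R -> Prop) (m : R) : Prop := P m /\ forall y, P y -> m <= y.
Definition is_inf (P : R -> Prop) (m : R) : Prop :=
  (forall y, P y -> m <= y) /\ (forall m', (forall y, P y -> m' <= y) -> m' <= m).

Definition PdirW_is (d : nat) (B : vec -> Prop) (r x : vec) (w : R) : Prop :=
  is_min_of (fun t => exists S, Sx B x S /\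
     is_max_of (fun y => exists s v, B s /\ In v S /\
                  y = dot d (vscale (/ norm d r) r) (vsub s v)) t) w.

Definition PWidth_set (d : nat) (A : list vec) (t : R) : Prop :=
  exists (K : vec -> Prop) (x r : vec),
    face (in_conv A) K /\ (exists y, K y) /\ K x /\ in_cone K x r /\ nonzero d r /\
    PdirW_is d (fun b => In b A /\ K b) r x t.

(* s is a valid choice of s_f(x), given gx = grad f(x) *)
Definition is_sf (d : nat) (A : list vec) (gx s : vec) : Prop :=
  In s A /\ forall a, In a A -> dot d gx s <= dot d gx a.
Definition is_vS (d : nat) (gx : vec) (S : list vec) (v : vec) : Prop :=
  In v S /\ forall w, In w S -> dot d gx w <= dot d gx v.
Definition is_vf (d : nat) (A : list vec) (x gx v : vec) : Prop :=
  (exists S, Sx (fun b => In b A) x S /\ is_vS d gx S v) /\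
  forall S v', Sx (fun b => In b A) x S -> is_vS d gx S v' -> dot d gx v <= dot d gx v'.

Definition gammaA (d : nat) (gx x xs s v : vec) : R :=
  dot d (vopp gx) (vsub xs x) / dot d (vopp gx) (vsub s v).

(* the set whose infimum (+oo if empty) is mu_f^A *)
Definition muA_set (d : nat) (A : list vec) (f : vec -> R) (g : vec -> vec) (y : R) : Prop :=
  exists x xs s v, in_conv A x /\ in_conv A xs /\ dot d (g x) (vsub xs x) < 0 /\
    is_sf d A (g x) s /\ is_vf d A x (g x) v /\
    y = 2 / (gammaA d (g x) x xs s v) ^ 2 * (f xs - f x - dot d (g x) (vsub xs x)).

Definition open_Rd (d : nat) (U : vec -> Prop) : Prop :=
  (forall x, U x -> inRd d x) /\
  forall x, U x -> exists delta, 0 < delta /\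
    forall y, inRd d y -> norm d (vsub y x) < delta -> U y.

Definition convex_on (U : vec -> Prop) (f : vec -> R) : Prop :=
  forall x y t, U x -> U y -> 0 <= t <= 1 ->
    f (vadd (vscale t x) (vscale (1 - t) y)) <= t * f x + (1 - t) * f y.

Definition has_gradient_on (d : nat) (U : vec -> Prop) (f : vec -> R) (g : vec -> vec) : Prop :=
  forall x, U x -> forall eps, 0 < eps -> exists delta, 0 < delta /\
    forall h, inRd d h -> norm d h < delta ->
      Rabs (f (vadd x h) - f x - dot d (g x) h) <= eps * norm d h.

(* Fix x and y in conv A with <G, y - x> < 0 for G = grad f(x), and write -G = p + q for the
   Moreau decomposition with respect to the cone generated by A - x: p lies in the cone,
   <q, a - x> <= 0 for every a in A, and <q, p> = 0.  The points of conv A where <q, . - x>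
   vanishes form a face K containing x, the active set S of v_f(x), and the direction p; on K
   the functionals <p, .> and <-G, .> differ by a constant, so PWidth(A) |p| <= <G, v_f - s_f>.
   As <-G, y - x> <= <p, y - x> <= |p| |y - x|, this gives PWidth(A) <= |y - x| / gamma^A(x, y),
   and strong convexity concludes.
   The projection onto the finitely generated cone is found among the orthogonal projections
   onto spans of sets of generators that happen to land in the cone: a Caratheodory exchange
   shows that these dominate every point of the cone. *)

From Stdlib Require Import Reals Lra Lia List Classical ClassicalDescription.
Import ListNotations.
Open Scope R_scope.

(** * Finite sums and the inner product *)

Definition sumR {X : Type} (l : list X) (F : X -> R) : R := fold_right Rplus 0 (map F l).

Section SumR.
Context {X : Type}.
Implicit Types (l : list X) (F G : X -> R).

Lemma sumR_cons a l F : sumR (a :: l) F = F a + sumR l F.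
Proof. reflexivity. Qed.

Lemma sumR_ext l F G : (forall a, In a l -> F a = G a) -> sumR l F = sumR l G.
Proof.
  induction l as [|b l IH]; intros H; [reflexivity|].
  rewrite !sumR_cons, (H b), IH; simpl; auto.
  intros; apply H; simpl; auto.
Qed.

Lemma sumR_add l F G : sumR l (fun a => F a + G a) = sumR l F + sumR l G.
Proof. induction l; [cbn; ring|]. rewrite !sumR_cons, IHl. ring. Qed.

Lemma sumR_sub l F G : sumR l (fun a => F a - G a) = sumR l F - sumR l G.
Proof. induction l; [cbn; ring|]. rewrite !sumR_cons, IHl. ring. Qed.

Lemma sumR_mull l k F : sumR l (fun a => k * F a) = k * sumR l F.
Proof. induction l; [cbn; ring|]. rewrite !sumR_cons, IHl. ring. Qed.

Lemma sumR_mulr l k F : sumR l (fun a => F a * k) = sumR l F * k.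
Proof. induction l; [cbn; ring|]. rewrite !sumR_cons, IHl. ring. Qed.

Lemma sumR_const0 l : sumR l (fun _ => 0) = 0.
Proof. induction l; [reflexivity|]. rewrite sumR_cons, IHl. ring. Qed.

Lemma sumR_le l F G : (forall a, In a l -> F a <= G a) -> sumR l F <= sumR l G.
Proof.
  induction l as [|b l IH]; intros H; [cbn; lra|]. rewrite !sumR_cons.
  assert (F b <= G b) by (apply H; simpl; auto).
  assert (sumR l F <= sumR l G) by (apply IH; intros; apply H; simpl; auto).
  lra.
Qed.

Lemma sumR_ge0 l F : (forall a, In a l -> 0 <= F a) -> 0 <= sumR l F.
Proof. intros H. rewrite <- (sumR_const0 l). apply sumR_le, H. Qed.

Lemma sumR_ge_term l F a : In a l -> (forall b, In b l -> 0 <= F b) -> F a <= sumR l F.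
Proof.
  induction l as [|b l IH]; intros Ha H; [destruct Ha|]. rewrite sumR_cons.
  assert (0 <= F b) by (apply H; simpl; auto).
  assert (0 <= sumR l F) by (apply sumR_ge0; intros; apply H; simpl; auto).
  destruct Ha as [<-|Ha]; [lra|].
  assert (F a <= sumR l F) by (apply IH; auto; intros; apply H; simpl; auto).
  lra.
Qed.

Lemma sumR_eq0_ge0 l F : (forall a, In a l -> 0 <= F a) -> sumR l F = 0 ->
  forall a, In a l -> F a = 0.
Proof.
  intros H E a Ha. pose proof (H a Ha). pose proof (sumR_ge_term l F a Ha H). lra.
Qed.

End SumR.

Lemma sumR_swap {X Y : Type} (l1 : list X) (l2 : list Y) (F : X -> Y -> R) :
  sumR l1 (fun a => sumR l2 (F a)) = sumR l2 (fun b => sumR l1 (fun a => F a b)).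
Proof.
  induction l1 as [|a l1 IH]; cbn - [sumR].
  - symmetry. apply sumR_const0.
  - rewrite sumR_cons, IH, <- sumR_add. reflexivity.
Qed.

Definition nsq (d : nat) (v : vec) : R := dot d v v.

Section Dot.
Variable d : nat.

Lemma dot_sumR u v : dot d u v = sumR (seq 0 d) (fun i => u i * v i).
Proof. reflexivity. Qed.

Lemma dot_ext u u' v v' :
  (forall i, u i = u' i) -> (forall i, v i = v' i) -> dot d u v = dot d u' v'.
Proof. intros Hu Hv. rewrite !dot_sumR. apply sumR_ext. intros; rewrite Hu, Hv; auto. Qed.

Lemma nsq_ext u v : (forall i, u i = v i) -> nsq d u = nsq d v.
Proof. intros H. apply dot_ext; exact H. Qed.

Lemma dot_comm u v : dot d u v = dot d v u.
Proof. rewrite !dot_sumR. apply sumR_ext. intros; ring. Qed.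

Lemma dot_addr u v w : dot d u (fun i => v i + w i) = dot d u v + dot d u w.
Proof. rewrite !dot_sumR, <- sumR_add. apply sumR_ext; intros; ring. Qed.

Lemma dot_subr u v w : dot d u (fun i => v i - w i) = dot d u v - dot d u w.
Proof. rewrite !dot_sumR, <- sumR_sub. apply sumR_ext; intros; ring. Qed.

Lemma dot_scaler u k v : dot d u (fun i => k * v i) = k * dot d u v.
Proof. rewrite !dot_sumR, <- sumR_mull. apply sumR_ext; intros; ring. Qed.

Lemma dot_addl u v w : dot d (fun i => v i + w i) u = dot d v u + dot d w u.
Proof. rewrite dot_comm, dot_addr, !(dot_comm u). reflexivity. Qed.

Lemma dot_subl u v w : dot d (fun i => v i - w i) u = dot d v u - dot d w u.
Proof. rewrite dot_comm, dot_subr, !(dot_comm u). reflexivity. Qed.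

Lemma dot_scalel u k v : dot d (fun i => k * v i) u = k * dot d v u.
Proof. rewrite dot_comm, dot_scaler, !(dot_comm u). reflexivity. Qed.

Lemma dot_oppl u v : dot d (fun i => - v i) u = - dot d v u.
Proof.
  rewrite (dot_ext _ (fun i => -1 * v i) u u), dot_scalel by (intros; ring). ring.
Qed.

Lemma dot_vanish u v : (forall i, (i < d)%nat -> u i = 0) -> dot d u v = 0.
Proof.
  intros H. rewrite dot_sumR, <- (sumR_const0 (seq 0 d)). apply sumR_ext.
  intros i Hi. apply in_seq in Hi. rewrite H by lia. ring.
Qed.

Lemma dot_self_ge0 u : 0 <= nsq d u.
Proof. apply sumR_ge0. intros. nra. Qed.

Lemma dot_self_eq0 u : nsq d u = 0 -> forall v, dot d u v = 0.
Proof.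
  intros H v. apply dot_vanish. intros i Hi.
  assert (Hz := sumR_eq0_ge0 _ _ (fun i _ => Rle_0_sqr (u i)) H i).
  unfold Rsqr in Hz. assert (u i * u i = 0) by (apply Hz, in_seq; lia). nra.
Qed.

Lemma dot_sumR_r {X : Type} (l : list X) u (F : X -> vec) :
  dot d u (fun i => sumR l (fun a => F a i)) = sumR l (fun a => dot d u (F a)).
Proof.
  rewrite dot_sumR.
  transitivity (sumR (seq 0 d) (fun i => sumR l (fun a => u i * F a i))).
  - apply sumR_ext. intros. rewrite <- sumR_mull. reflexivity.
  - rewrite sumR_swap. reflexivity.
Qed.

Lemma dot_lsum (L : list vec) c w : dot d w (lsum L c) = sumR L (fun a => c a * dot d w a).
Proof.
  transitivity (sumR L (fun a => dot d w (fun i => c a * a i))).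
  - exact (dot_sumR_r L w (fun a i => c a * a i)).
  - apply sumR_ext. intros. apply dot_scaler.
Qed.

Lemma nsq_sub_scale X w t :
  nsq d (fun i => X i - t * w i) = nsq d X - 2 * t * dot d X w + t ^ 2 * nsq d w.
Proof.
  unfold nsq. rewrite dot_subl, !dot_subr, !dot_scalel, !dot_scaler, (dot_comm w X). ring.
Qed.

Lemma nsq_convex X Y s : 0 <= s <= 1 ->
  nsq d (fun i => (1 - s) * X i + s * Y i) <= (1 - s) * nsq d X + s * nsq d Y.
Proof.
  intros Hs. pose proof (dot_self_ge0 (fun i => X i - Y i)) as H.
  unfold nsq in *. rewrite dot_subl, !dot_subr in H.
  rewrite dot_addl, !dot_addr, !dot_scalel, !dot_scaler.
  rewrite (dot_comm Y X) in *. assert (0 <= s * (1 - s)) by nra. nra.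
Qed.

Lemma dot_le_norm_mul u v : dot d u v <= norm d u * norm d v.
Proof.
  unfold norm. rewrite <- sqrt_mult by apply dot_self_ge0.
  assert (Hsq : (dot d u v) ^ 2 <= nsq d u * nsq d v).
  { destruct (Req_dec (nsq d v) 0) as [Hv|Hv].
    - rewrite Hv, dot_comm, (dot_self_eq0 v Hv). lra.
    - assert (Hvp : 0 < nsq d v) by (pose proof (dot_self_ge0 v); lra).
      pose proof (dot_self_ge0 (fun i => u i - (dot d u v / nsq d v) * v i)) as H.
      rewrite nsq_sub_scale in H.
      replace (nsq d u - 2 * (dot d u v / nsq d v) * dot d u v
               + (dot d u v / nsq d v) ^ 2 * nsq d v)
        with ((nsq d u * nsq d v - (dot d u v) ^ 2) / nsq d v) in H by (field; lra).
      assert (Hm := Rmult_le_pos _ _ H (Rlt_le _ _ Hvp)).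
      replace ((nsq d u * nsq d v - dot d u v ^ 2) / nsq d v * nsq d v)
        with (nsq d u * nsq d v - dot d u v ^ 2) in Hm by (field; lra).
      lra. }
  apply Rle_trans with (Rabs (dot d u v)); [apply Rle_abs|].
  rewrite <- sqrt_Rsqr_abs. apply sqrt_le_1_alt. unfold Rsqr, nsq in *. lra.
Qed.

End Dot.

(** * Linear combinations and projection onto spans *)

(* Coefficients are indexed by position in [T], so repeated vectors get independent weights. *)
Fixpoint comb (T : list vec) (cs : nat -> R) : vec :=
  match T with
  | [] => fun _ => 0
  | u :: L => fun i => cs 0%nat * u i + comb L (fun j => cs (S j)) i
  end.

Fixpoint combR (T : list vec) (cs : nat -> R) (h : vec -> R) : R :=
  match T with
  | [] => 0
  | u :: L => cs 0%nat * h u + combR L (fun j => cs (S j)) h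
  end.

Definition coef_nonneg (T : list vec) (cs : nat -> R) : Prop :=
  forall j, (j < length T)%nat -> 0 <= cs j.

Lemma coef_nonneg_tail u T cs : coef_nonneg (u :: T) cs -> coef_nonneg T (fun j => cs (S j)).
Proof. intros H j Hj. apply H. simpl. lia. Qed.

Lemma comb_ext T cs cs' i :
  (forall j, (j < length T)%nat -> cs j = cs' j) -> comb T cs i = comb T cs' i.
Proof.
  revert cs cs'; induction T; intros cs cs' H; simpl; auto.
  rewrite (H 0%nat) by (simpl; lia). f_equal. apply IHT. intros; apply H; simpl; lia.
Qed.

Lemma comb_lin T cs1 cs2 k i :
  comb T (fun j => cs1 j + k * cs2 j) i = comb T cs1 i + k * comb T cs2 i.
Proof. revert cs1 cs2; induction T; intros; simpl; [ring|]. rewrite IHT. ring. Qed.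

Lemma comb_scale T cs k i : comb T (fun j => k * cs j) i = k * comb T cs i.
Proof. revert cs; induction T; intros; simpl; [ring|]. rewrite IHT. ring. Qed.

Lemma comb0 T i : comb T (fun _ => 0) i = 0.
Proof.
  rewrite (comb_ext T _ (fun j => 0 * (fun _ => 0) j)), comb_scale by (intros; ring). ring.
Qed.

Lemma combR0 T cs h : (forall u, In u T -> h u = 0) -> combR T cs h = 0.
Proof.
  revert cs; induction T; intros cs H; simpl; auto.
  rewrite H, IHT; [ring| |simpl; auto]. intros; apply H; simpl; auto.
Qed.

Lemma combR_le T cs h h' : coef_nonneg T cs ->
  (forall u, In u T -> h u <= h' u) -> combR T cs h <= combR T cs h'.
Proof.
  revert cs; induction T as [|a T IH]; intros cs H1 H2; simpl; [lra|].
  assert (0 <= cs 0%nat) by (apply H1; simpl; lia).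
  assert (h a <= h' a) by (apply H2; simpl; auto).
  assert (combR T (fun j => cs (S j)) h <= combR T (fun j => cs (S j)) h').
  { apply IH; [apply coef_nonneg_tail with a; auto|intros; apply H2; simpl; auto]. }
  nra.
Qed.

Lemma dot_comb d r T cs : dot d r (comb T cs) = combR T cs (dot d r).
Proof.
  revert cs; induction T; intros; simpl.
  - rewrite dot_comm. apply dot_vanish. auto.
  - rewrite dot_addr, dot_scaler, IHT. reflexivity.
Qed.

Lemma comb_In T u : In u T -> exists e, forall i, u i = comb T e i.
Proof.
  induction T as [|a L IH]; intros H; [destruct H|]. destruct H as [<-|H].
  - exists (fun j => match j with 0%nat => 1 | _ => 0 end). intros i; simpl.
    rewrite comb0. ring.
  - destruct (IH H) as [e He]. exists (fun j => match j with 0%nat => 0 | S j => e j end).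
    intros i; simpl. rewrite He. ring_simplify. apply comb_ext. auto.
Qed.

Lemma comb_incl T' T : incl T' T -> forall cs', exists cs, forall i, comb T' cs' i = comb T cs i.
Proof.
  induction T' as [|u L IH]; intros H cs'.
  - exists (fun _ => 0). intros; simpl. rewrite comb0. auto.
  - destruct (comb_In T u) as [e He]; [apply H; simpl; auto|].
    destruct (IH (proj2 (incl_cons_inv H)) (fun j => cs' (S j))) as [cr Hcr].
    exists (fun j => cr j + cs' 0%nat * e j). intros i. simpl. rewrite comb_lin, He, Hcr. ring.
Qed.

Fixpoint remove_nth (j : nat) (T : list vec) : list vec :=
  match T, j with
  | [], _ => []
  | _ :: L, 0%nat => L
  | u :: L, S j' => u :: remove_nth j' L
  end.

Definition skip_coef (j : nat) (cs : nat -> R) : nat -> R :=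
  fun k => if Nat.ltb k j then cs k else cs (S k).

Lemma comb_remove_nth T : forall j cs i, (j < length T)%nat -> cs j = 0 ->
  comb (remove_nth j T) (skip_coef j cs) i = comb T cs i.
Proof.
  induction T as [|u L IH]; intros j cs i Hj Hc; simpl in Hj; [lia|].
  destruct j as [|j'].
  - simpl. rewrite Hc, Rmult_0_l, Rplus_0_l.
    apply comb_ext. intros; unfold skip_coef; simpl. reflexivity.
  - simpl. unfold skip_coef at 1. simpl. f_equal.
    rewrite <- (IH j' (fun k => cs (S k))) by (auto; lia).
    apply comb_ext. intros k _. unfold skip_coef. simpl. reflexivity.
Qed.

Lemma remove_nth_length T :
  forall j, (j < length T)%nat -> length (remove_nth j T) = pred (length T).
Proof.
  induction T; intros j Hj; simpl in *; [lia|]. destruct j; simpl; auto.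
  rewrite IHT by lia. destruct T; simpl in *; lia.
Qed.

Lemma remove_nth_incl T j : incl (remove_nth j T) T.
Proof.
  revert j; induction T as [|a L IH]; intros j u H; [destruct j; destruct H|].
  destruct j as [|j]; simpl in H; [right; auto|].
  destruct H as [H|H]; [left; auto|right; eapply IH; eauto].
Qed.

Lemma skip_coef_nonneg T j cs : coef_nonneg T cs -> (j < length T)%nat ->
  coef_nonneg (remove_nth j T) (skip_coef j cs).
Proof.
  intros H Hj k Hk. rewrite remove_nth_length in Hk by auto.
  unfold skip_coef. destruct (Nat.ltb k j); apply H; lia.
Qed.

Section SpanProjection.
Variable d : nat.

Fixpoint span_proj (T : list vec) (b : vec) : vec :=
  match T with
  | [] => fun _ => 0
  | u :: L =>
      let pb := span_proj L b in
      let w := fun i => u i - span_proj L u i in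
      if Req_EM_T (nsq d w) 0 then pb
      else fun i => pb i + (dot d (fun j => b j - pb j) w / nsq d w) * w i
  end.

Lemma span_proj_comb T b : exists cs, forall i, span_proj T b i = comb T cs i.
Proof.
  revert b; induction T as [|u L IH]; intros b.
  - exists (fun _ => 0). intros; reflexivity.
  - destruct (IH b) as [cb Hb]. destruct (IH u) as [cu Hu]. simpl.
    destruct (Req_EM_T _ 0).
    + exists (fun j => match j with 0%nat => 0 | S j => cb j end).
      intros; simpl. rewrite Hb, Rmult_0_l, Rplus_0_l. reflexivity.
    + set (al := dot d (fun j => b j - span_proj L b j) (fun i => u i - span_proj L u i) /
                 nsq d (fun i => u i - span_proj L u i)).
      exists (fun j => match j with 0%nat => al | S j => cb j + (- al) * cu j end).
      intros; simpl. rewrite comb_lin, Hb, Hu. fold al. ring.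
Qed.

Lemma span_proj_orth T b u' : In u' T -> dot d (fun i => b i - span_proj T b i) u' = 0.
Proof.
  revert b u'; induction T as [|u L IH]; intros b u' Hin; [destruct Hin|].
  destruct (span_proj_comb L u) as [cu Hu].
  assert (Hsplit : forall v,
    dot d v u = dot d v (fun i => u i - span_proj L u i) + combR L cu (dot d v)).
  { intros v. rewrite <- dot_comb, <- dot_addr. apply dot_ext; intros; auto. rewrite Hu. ring. }
  simpl. destruct (Req_EM_T _ 0) as [E|E].
  - destruct Hin as [<-|Hin]; [|apply IH; auto].
    rewrite Hsplit, dot_comm, (dot_self_eq0 _ _ E), combR0 by (intros; apply IH; auto). ring.
  - set (w := fun i => u i - span_proj L u i) in *.
    set (al := dot d (fun j => b j - span_proj L b j) w / nsq d w).
    assert (Hres : forall v, dot d (fun i => b i - (span_proj L b i + al * w i)) v =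
                     dot d (fun i => b i - span_proj L b i) v - al * dot d w v).
    { intros v. rewrite <- dot_scalel, <- dot_subl. apply dot_ext; intros; auto; ring. }
    assert (HL : forall v, In v L -> dot d (fun i => b i - (span_proj L b i + al * w i)) v = 0).
    { intros v Hv. rewrite Hres, IH, (IH u) by auto. ring. }
    destruct Hin as [<-|Hin]; [|apply HL; auto].
    rewrite Hsplit, combR0 by auto. rewrite Hres. unfold al, nsq. field. auto.
Qed.

Lemma span_proj_min T b cs :
  nsq d (fun i => b i - span_proj T b i) <= nsq d (fun i => b i - comb T cs i).
Proof.
  destruct (span_proj_comb T b) as [cp Hp].
  set (r := fun i => b i - span_proj T b i).
  set (z := comb T (fun j => cp j + (-1) * cs j)).
  assert (Hr : dot d r z = 0).
  { unfold z. rewrite dot_comb. apply combR0. intros; apply span_proj_orth; auto. }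
  unfold nsq. rewrite (dot_ext d (fun i => b i - comb T cs i) (fun i => r i + z i)
    (fun i => b i - comb T cs i) (fun i => r i + z i))
    by (intros; unfold r, z; rewrite comb_lin, Hp; ring).
  rewrite dot_addl, !dot_addr, Hr, (dot_comm d z r), Hr.
  pose proof (dot_self_ge0 d z). unfold nsq in *. lra.
Qed.

Lemma span_proj_dist_incl T T' b : incl T' T ->
  nsq d (fun i => b i - span_proj T b i) <= nsq d (fun i => b i - span_proj T' b i).
Proof.
  intros H. destruct (span_proj_comb T' b) as [c' Hc']. destruct (comb_incl T' T H c') as [c Hc].
  eapply Rle_trans; [apply (span_proj_min T b c)|]. right.
  apply dot_ext; intros i; rewrite Hc', Hc; auto.
Qed.

End SpanProjection.

(** * Projection onto a finitely generated cone *)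

Lemma list_argmin {X : Type} (L : list X) (P : X -> Prop) (h : X -> R) :
  (exists j, In j L /\ P j) ->
  exists j0, In j0 L /\ P j0 /\ forall j, In j L -> P j -> h j0 <= h j.
Proof.
  induction L as [|a L IH]; intros [j [Hj HP]]; [destruct Hj|].
  destruct (classic (exists j, In j L /\ P j)) as [Hex|Hno].
  - destruct (IH Hex) as [j1 [H1 [H2 H3]]].
    destruct (classic (P a /\ h a < h j1)) as [[Pa Ha]|Hn].
    + exists a. split; [simpl; auto|split; auto]. intros j' [<-|Hj'] HPj'; [lra|].
      specialize (H3 j' Hj' HPj'). lra.
    + exists j1. split; [simpl; auto|split; auto]. intros j' [<-|Hj'] HPj'; [|auto].
      apply Rnot_lt_le. intro. apply Hn. auto.
  - assert (Pa : P a) by (destruct Hj as [<-|Hj]; auto; exfalso; apply Hno; eauto).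
    exists a. split; [simpl; auto|split; auto]. intros j' [<-|Hj'] HPj'; [lra|].
    exfalso; apply Hno; eauto.
Qed.

(* Carathéodory exchange: move from [cs] towards [de] until a first coefficient hits 0. *)
Lemma coef_exchange (n : nat) (cs de : nat -> R) :
  (forall j, (j < n)%nat -> 0 <= cs j) -> (exists j, (j < n)%nat /\ de j < 0) ->
  exists s j0, 0 <= s <= 1 /\ (j0 < n)%nat /\
    (forall j, (j < n)%nat -> 0 <= (1 - s) * cs j + s * de j) /\
    (1 - s) * cs j0 + s * de j0 = 0.
Proof.
  intros Hc [j1 [Hj1 Hd1]].
  destruct (list_argmin (seq 0 n) (fun j => de j < 0) (fun j => cs j / (cs j - de j)))
    as [j0 [Hj0 [Hd0 Hmin]]].
  { exists j1. split; [apply in_seq; lia|auto]. }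
  apply in_seq in Hj0. set (s := cs j0 / (cs j0 - de j0)) in *.
  assert (Hc0 : 0 <= cs j0) by (apply Hc; lia).
  assert (Hs : 0 <= s <= 1).
  { unfold s. split; [apply Rle_mult_inv_pos; lra|].
    apply Rmult_le_reg_r with (cs j0 - de j0); [lra|]. field_simplify; lra. }
  exists s, j0. split; [auto|split; [lia|split]].
  - intros j Hj. assert (0 <= cs j) by (apply Hc; lia).
    destruct (Rlt_dec (de j) 0) as [Hn|Hn]; [|nra].
    assert (Hsj : s <= cs j / (cs j - de j)) by (apply Hmin; auto; apply in_seq; lia).
    apply Rmult_le_compat_r with (r := cs j - de j) in Hsj; [|lra].
    unfold Rdiv in Hsj. rewrite Rmult_assoc, Rinv_l in Hsj by lra. nra.
  - unfold s. field. lra.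
Qed.

Definition in_gen_cone (Gs : list vec) (z : vec) : Prop :=
  exists T cs, incl T Gs /\ coef_nonneg T cs /\ forall i, z i = comb T cs i.

Lemma in_gen_cone_add (Gs : list vec) p u t : in_gen_cone Gs p -> In u Gs -> 0 <= t ->
  in_gen_cone Gs (fun i => p i + t * u i).
Proof.
  intros [T [cs [HT [Hcs Hp]]]] Hu Ht.
  exists (u :: T), (fun j => match j with 0%nat => t | S j => cs j end). split; [|split].
  - intros v [<-|Hv]; auto.
  - intros [|j] Hj; auto. apply Hcs. simpl in Hj. lia.
  - intros i. simpl. rewrite Hp, Rplus_comm. reflexivity.
Qed.

Lemma in_gen_cone_scale (Gs : list vec) p k : in_gen_cone Gs p -> 0 <= k ->
  in_gen_cone Gs (fun i => k * p i).
Proof.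
  intros [T [cs [HT [Hcs Hp]]]] Hk. exists T, (fun j => k * cs j). split; auto. split.
  - intros j Hj. specialize (Hcs j Hj). nra.
  - intros i. rewrite comb_scale, Hp. ring.
Qed.

Section ConeProjection.
Variables (d : nat) (b : vec) (Gs : list vec).

Lemma span_proj_in_cone_closer T cs : incl T Gs -> coef_nonneg T cs ->
  exists T', incl T' Gs /\ in_gen_cone Gs (span_proj d T' b) /\
    nsq d (fun i => b i - span_proj d T' b i) <= nsq d (fun i => b i - comb T cs i).
Proof.
  remember (length T) as n eqn:Hn. revert T cs Hn.
  induction n as [|n IH]; intros T cs Hn HG Hc;
    destruct (span_proj_comb d T b) as [de Hde];
    (destruct (classic (coef_nonneg T de)) as [Hgood|Hbad];
     [exists T; split; auto; split; [exists T, de; auto|apply span_proj_min]|]).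
  - exfalso. apply Hbad. intros j Hj. lia.
  - destruct (coef_exchange (length T) cs de Hc) as [s [j0 [Hs [Hj0 [Hla Hla0]]]]].
    { apply not_all_ex_not in Hbad. destruct Hbad as [j Hj].
      apply imply_to_and in Hj. destruct Hj as [Hj1 Hj2]. exists j. split; [auto|lra]. }
    set (la := fun j => (1 - s) * cs j + s * de j) in *.
    destruct (IH (remove_nth j0 T) (skip_coef j0 la)) as [T' [HT'1 [HT'2 HT'3]]].
    + rewrite remove_nth_length; lia.
    + intros u Hu. apply HG. eapply remove_nth_incl; eauto.
    + apply skip_coef_nonneg; auto.
    + exists T'. split; auto. split; auto. eapply Rle_trans; [apply HT'3|].
      assert (E : forall i, b i - comb (remove_nth j0 T) (skip_coef j0 la) i =
                    (1 - s) * (b i - comb T cs i) + s * (b i - span_proj d T b i)).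
      { intros i. rewrite comb_remove_nth by auto. unfold la.
        rewrite (comb_ext T _ (fun j => cs j + s * (de j + (-1) * cs j))) by (intros; ring).
        rewrite !comb_lin, Hde. ring. }
      rewrite (nsq_ext d _ _ E).
      eapply Rle_trans; [apply nsq_convex; auto|].
      pose proof (span_proj_min d T b cs). nra.
Qed.

Fixpoint sublists (l : list vec) : list (list vec) :=
  match l with [] => [[]] | a :: l => map (cons a) (sublists l) ++ sublists l end.

Lemma filter_in_sublists f l : In (filter f l) (sublists l).
Proof.
  induction l; simpl; auto.
  destruct (f a); apply in_or_app; [left; apply in_map|right]; auto.
Qed.

Definition memb (T : list vec) (u : vec) : bool :=
  if excluded_middle_informative (In u T) then true else false.

Lemma memb_filter T u : In u (filter (memb T) Gs) <-> In u Gs /\ In u T.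
Proof.
  rewrite filter_In. unfold memb.
  destruct (excluded_middle_informative (In u T)); intuition; discriminate.
Qed.

(* Minimise over the finitely many sublists of [Gs] whose span projection lies in the cone. *)
Lemma cone_proj_exists : exists p, in_gen_cone Gs p /\
  forall z, in_gen_cone Gs z -> nsq d (fun i => b i - p i) <= nsq d (fun i => b i - z i).
Proof.
  set (val := fun T => nsq d (fun i => b i - span_proj d T b i)).
  set (Good := fun T => exists p, in_gen_cone Gs p /\ nsq d (fun i => b i - p i) = val T).
  assert (Hne : exists T, In T (sublists Gs) /\ Good T).
  { exists []. split.
    - replace (@nil vec) with (filter (fun _ => false) Gs) by (induction Gs; auto).
      apply filter_in_sublists.
    - exists (fun _ => 0). split; [|reflexivity].
      exists [], (fun _ => 0).
      split; [intros u []|split; [intros j Hj; simpl in Hj; lia|reflexivity]]. }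
  destruct (list_argmin _ Good val Hne) as [Ts [_ [[ps [Hps1 Hps2]] Hmin]]].
  exists ps. split; auto. intros z [T [cs [HT [Hcs Hz]]]].
  destruct (span_proj_in_cone_closer T cs HT Hcs) as [T' [HT'1 [HT'2 HT'3]]].
  set (T'' := filter (memb T') Gs).
  assert (E1 : val T'' <= val T')
    by (apply span_proj_dist_incl; intros u Hu; apply memb_filter; auto).
  assert (E2 : val Ts <= val T'').
  { apply Hmin; [apply filter_in_sublists|].
    exists (span_proj d T' b). split; auto. apply Rle_antisym; [|apply E1].
    apply span_proj_dist_incl. intros u Hu; apply memb_filter in Hu; tauto. }
  rewrite Hps2. eapply Rle_trans; [apply E2|]. eapply Rle_trans; [apply E1|].
  eapply Rle_trans; [apply HT'3|]. right. apply dot_ext; intros; rewrite Hz; auto.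
Qed.

Lemma min_dir_nonpos p w :
  (forall t, 0 < t <= 1 ->
     nsq d (fun i => b i - p i) <= nsq d (fun i => b i - (p i + t * w i))) ->
  dot d (fun i => b i - p i) w <= 0.
Proof.
  intros H. apply Rnot_lt_le. intros Hk.
  set (k := dot d (fun i => b i - p i) w) in *.
  assert (Hn : 0 <= nsq d w) by apply dot_self_ge0.
  set (t := k / (nsq d w + k)).
  assert (Htk : t * (nsq d w + k) = k) by (unfold t; field; lra).
  assert (Ht : 0 < t <= 1).
  { unfold t. split; [apply Rdiv_lt_0_compat; lra|].
    apply Rmult_le_reg_r with (nsq d w + k); [lra|]. fold t. lra. }
  specialize (H t Ht).
  rewrite (nsq_ext d (fun i => b i - (p i + t * w i)) (fun i => (b i - p i) - t * w i)),
    nsq_sub_scale in H by (intros; ring). fold k in H.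
  assert (H2 : 2 * k <= t * nsq d w).
  { apply Rmult_le_reg_l with t; [lra|]. nra. }
  nra.
Qed.

Lemma cone_proj_normal p : in_gen_cone Gs p ->
  (forall z, in_gen_cone Gs z -> nsq d (fun i => b i - p i) <= nsq d (fun i => b i - z i)) ->
  forall u, In u Gs -> dot d (fun i => b i - p i) u <= 0.
Proof.
  intros Hp Hmin u Hu. apply min_dir_nonpos. intros t Ht.
  apply Hmin, in_gen_cone_add; auto; lra.
Qed.

Lemma cone_proj_orth p : in_gen_cone Gs p ->
  (forall z, in_gen_cone Gs z -> nsq d (fun i => b i - p i) <= nsq d (fun i => b i - z i)) ->
  dot d (fun i => b i - p i) p = 0.
Proof.
  intros Hp Hmin.
  assert (Hle : dot d (fun i => b i - p i) p <= 0).
  { apply min_dir_nonpos. intros t Ht.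
    rewrite (nsq_ext d (fun i => b i - (p i + t * p i)) (fun i => b i - (1 + t) * p i))
      by (intros; ring).
    apply Hmin, in_gen_cone_scale; auto; lra. }
  assert (Hge : dot d (fun i => b i - p i) (fun i => - p i) <= 0).
  { apply min_dir_nonpos. intros t Ht.
    rewrite (nsq_ext d (fun i => b i - (p i + t * - p i)) (fun i => b i - (1 - t) * p i))
      by (intros; ring).
    apply Hmin, in_gen_cone_scale; auto; lra. }
  rewrite dot_comm, dot_oppl, dot_comm in Hge. lra.
Qed.

End ConeProjection.

(** * Convex hulls and exposed faces *)

Section Polytope.
Variables (d : nat) (A : list vec).

Lemma convex_repr_dot_le (L : list vec) c z w M :
  (forall a, In a L -> 0 <= c a) -> csum L c = 1 -> (forall i, z i = lsum L c i) ->
  (forall a, In a L -> dot d w a <= M) -> dot d w z <= M.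
Proof.
  intros Hc Hs Hz H. rewrite (dot_ext d w w z (lsum L c)), dot_lsum by auto.
  replace M with (sumR L (fun a => c a * M))
    by (rewrite sumR_mulr; change (csum L c * M = M); rewrite Hs; ring).
  apply sumR_le. intros a Ha. specialize (Hc a Ha). specialize (H a Ha). nra.
Qed.

Lemma in_conv_dot_le z w M : in_conv A z -> (forall a, In a A -> dot d w a <= M) -> dot d w z <= M.
Proof. intros [c [Hc [Hs Hz]]]. exact (convex_repr_dot_le A c z w M Hc Hs Hz). Qed.

Lemma in_conv_dot_ge z w M : in_conv A z -> (forall a, In a A -> M <= dot d w a) -> M <= dot d w z.
Proof.
  intros Hz H. cut (dot d (fun i => - w i) z <= - M); [rewrite dot_oppl; lra|].
  apply in_conv_dot_le; auto. intros a Ha. rewrite dot_oppl. specialize (H a Ha). lra.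
Qed.

Lemma Sx_dot_le B x S w M : Sx B x S -> (forall v, In v S -> dot d w v <= M) -> dot d w x <= M.
Proof.
  intros [_ [_ [c [Hc [Hs Hx]]]]]. apply (convex_repr_dot_le S c); auto.
  intros; apply Rlt_le; auto.
Qed.

Lemma in_conv_vertex a : In a A -> in_conv A a.
Proof.
  intros Ha.
  set (ind := fun b : vec => if excluded_middle_informative (b = a) then 1 else 0).
  assert (Hind : forall b, 0 <= ind b)
    by (intros; unfold ind; destruct (excluded_middle_informative _); lra).
  set (n := sumR A ind).
  assert (Hn : 1 <= n).
  { replace 1 with (ind a)
      by (unfold ind; destruct (excluded_middle_informative (a = a)); congruence).
    apply sumR_ge_term; auto. }
  exists (fun b => ind b / n). split; [|split].
  - intros b _. apply Rle_mult_inv_pos; auto; lra.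
  - change (sumR A (fun b => ind b / n) = 1). unfold Rdiv. rewrite sumR_mulr. fold n. field. lra.
  - intros i. change (a i = sumR A (fun b => ind b / n * b i)).
    transitivity (sumR A (fun b => ind b * (/ n * a i))).
    + rewrite sumR_mulr. fold n. field. lra.
    + apply sumR_ext. intros b _. unfold ind.
      destruct (excluded_middle_informative (b = a)) as [->|]; field; lra.
Qed.

Lemma in_conv_comb x1 x2 t : in_conv A x1 -> in_conv A x2 -> 0 <= t <= 1 ->
  in_conv A (vadd (vscale t x1) (vscale (1 - t) x2)).
Proof.
  intros [c1 [H11 [H12 H13]]] [c2 [H21 [H22 H23]]] Ht.
  exists (fun a => t * c1 a + (1 - t) * c2 a). split; [|split].
  - intros a Ha. specialize (H11 a Ha); specialize (H21 a Ha). nra.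
  - change (sumR A (fun a => t * c1 a + (1 - t) * c2 a) = 1).
    rewrite sumR_add, !sumR_mull. change (t * csum A c1 + (1 - t) * csum A c2 = 1).
    rewrite H12, H22. ring.
  - intros i. unfold vadd, vscale. rewrite H13, H23.
    change (t * sumR A (fun a => c1 a * a i) + (1 - t) * sumR A (fun a => c2 a * a i) =
            sumR A (fun a => (t * c1 a + (1 - t) * c2 a) * a i)).
    rewrite <- !sumR_mull, <- sumR_add. apply sumR_ext; intros; ring.
Qed.

Definition cone_gens (x : vec) : list vec := map (fun a => vsub a x) A.

Lemma cone_gens_comb x T cs : incl T (cone_gens x) -> coef_nonneg T cs ->
  exists c, (forall a, In a A -> 0 <= c a) /\ csum A c = combR T cs (fun _ => 1) /\
    forall i, lsum A c i = comb T cs i + combR T cs (fun _ => 1) * x i.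
Proof.
  revert cs; induction T as [|u L IH]; intros cs HT Hcs.
  - exists (fun _ => 0). split; [intros; lra|]. split.
    + apply sumR_const0.
    + intros i. change (sumR A (fun a => 0 * a i) = 0 + 0 * x i).
      rewrite (sumR_ext A _ (fun _ => 0)), sumR_const0 by (intros; ring). ring.
  - destruct (IH (fun j => cs (S j))) as [cr [Hr1 [Hr2 Hr3]]].
    { intros v Hv; apply HT; simpl; auto. } { apply coef_nonneg_tail with u; auto. }
    destruct (proj1 (in_map_iff _ _ _) (HT u (or_introl eq_refl))) as [a [Hau Ha]].
    destruct (in_conv_vertex a Ha) as [ca [Ha1 [Ha2 Ha3]]].
    assert (H0 : 0 <= cs 0%nat) by (apply Hcs; simpl; lia).
    exists (fun b => cs 0%nat * ca b + cr b). split; [|split].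
    + intros b Hb. specialize (Ha1 b Hb); specialize (Hr1 b Hb). nra.
    + change (sumR A (fun b => cs 0%nat * ca b + cr b) = combR (u :: L) cs (fun _ => 1)).
      rewrite sumR_add, sumR_mull.
      change (cs 0%nat * csum A ca + csum A cr = combR (u :: L) cs (fun _ => 1)).
      rewrite Ha2, Hr2. simpl. ring.
    + intros i. transitivity (cs 0%nat * lsum A ca i + lsum A cr i).
      * change (sumR A (fun b => (cs 0%nat * ca b + cr b) * b i) =
                cs 0%nat * sumR A (fun b => ca b * b i) + sumR A (fun b => cr b * b i)).
        rewrite <- sumR_mull, <- sumR_add. apply sumR_ext; intros; ring.
      * rewrite <- Ha3, Hr3. simpl. rewrite <- Hau. unfold vsub. ring.
Qed.

Lemma comb_weight0 T cs : coef_nonneg T cs -> combR T cs (fun _ => 1) = 0 ->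
  forall i, comb T cs i = 0.
Proof.
  revert cs; induction T as [|u L IH]; intros cs Hcs H i; simpl; auto.
  simpl in H. assert (0 <= cs 0%nat) by (apply Hcs; simpl; lia).
  assert (0 <= combR L (fun j => cs (S j)) (fun _ => 1)).
  { rewrite <- (combR0 L (fun j => cs (S j)) (fun _ => 0)) by auto.
    apply combR_le; [apply coef_nonneg_tail with u; auto|intros; lra]. }
  assert (cs 0%nat = 0) by lra. rewrite H2, IH; [ring| |lra].
  apply coef_nonneg_tail with u; auto.
Qed.

Lemma in_gen_cone_conv x p : in_gen_cone (cone_gens x) p -> nonzero d p ->
  exists t, 0 < t /\ in_conv A (fun i => x i + t * p i).
Proof.
  intros [T [cs [HT [Hcs Hp]]]] [j [Hj Hpj]].
  destruct (cone_gens_comb x T cs HT Hcs) as [c [Hc1 [Hc2 Hc3]]].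
  set (La := combR T cs (fun _ => 1)) in *.
  assert (HLa0 : 0 <= La).
  { unfold La. rewrite <- (combR0 T cs (fun _ => 0)) by auto. apply combR_le; auto. intros; lra. }
  assert (HLa : La <> 0) by (intro E; apply Hpj; rewrite Hp; apply comb_weight0; auto).
  exists (/ La). split; [apply Rinv_0_lt_compat; lra|].
  exists (fun a => c a / La). split; [|split].
  - intros; apply Rle_mult_inv_pos; auto; lra.
  - change (sumR A (fun a => c a / La) = 1). unfold Rdiv. rewrite sumR_mulr.
    change (csum A c * / La = 1). rewrite Hc2. field. auto.
  - intros i. change (x i + / La * p i = sumR A (fun a => c a / La * a i)).
    transitivity (lsum A c i / La).
    + rewrite Hc3, <- Hp. field. auto.
    + change (sumR A (fun a => c a * a i) / La = sumR A (fun a => c a / La * a i)).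
      unfold Rdiv. rewrite <- sumR_mulr. apply sumR_ext; intros; ring.
Qed.

End Polytope.

Section ContactFace.
Variables (d : nat) (A : list vec) (q x : vec).
Hypothesis hq : forall a, In a A -> dot d q (vsub a x) <= 0.

Definition contact (z : vec) : Prop := in_conv A z /\ dot d q (vsub z x) = 0.

Lemma in_conv_dir_nonpos z : in_conv A z -> dot d q (vsub z x) <= 0.
Proof.
  intros Hz. unfold vsub. rewrite dot_subr.
  cut (dot d q z <= dot d q x); [lra|].
  apply (in_conv_dot_le d A); auto. intros a Ha.
  specialize (hq a Ha). unfold vsub in hq. rewrite dot_subr in hq. lra.
Qed.

Lemma dot_vsub_affine x1 x2 t :
  dot d q (vsub (vadd (vscale t x1) (vscale (1 - t) x2)) x) =
  t * dot d q (vsub x1 x) + (1 - t) * dot d q (vsub x2 x).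
Proof.
  rewrite <- !dot_scaler, <- dot_addr. apply dot_ext; intros; auto.
  unfold vsub, vadd, vscale. ring.
Qed.

Lemma contact_face : face (in_conv A) contact.
Proof.
  split; [intros z [Hz _]; auto|split].
  - intros x1 x2 t [H1 E1] [H2 E2] Ht. split; [apply in_conv_comb; auto|].
    rewrite dot_vsub_affine, E1, E2. ring.
  - intros x1 x2 t H1 H2 Ht [_ E]. rewrite dot_vsub_affine in E.
    pose proof (in_conv_dir_nonpos x1 H1). pose proof (in_conv_dir_nonpos x2 H2).
    split; split; auto; nra.
Qed.

Lemma contact_base : in_conv A x -> contact x.
Proof.
  intros Hx. split; auto. rewrite dot_comm. apply dot_vanish. intros; unfold vsub; ring.
Qed.

Lemma contact_dot_vsub s v : contact s -> contact v -> dot d q (vsub s v) = 0.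
Proof.
  intros [_ Es] [_ Ev]. unfold vsub in *.
  rewrite (dot_ext d q q _ (fun i => (s i - x i) - (v i - x i))), dot_subr, Es, Ev
    by (intros; auto; ring).
  ring.
Qed.

(* The support of x cannot leave the contact set: its weights are positive
   and the weighted sum of the nonpositive values [dot q (w - x)] vanishes. *)
Lemma Sx_contact S : Sx (fun b => In b A) x S -> Sx (fun b => In b A /\ contact b) x S.
Proof.
  intros [HSA HS]. split; auto. pose proof HS as [_ [c [Hc [Hs Hx]]]].
  assert (Hsum : sumR S (fun w => c w * dot d q x - c w * dot d q w) = 0).
  { rewrite sumR_sub, sumR_mulr.
    change (csum S c * dot d q x - sumR S (fun w => c w * dot d q w) = 0).
    rewrite Hs, <- (dot_lsum d S c q), (dot_ext d q q (lsum S c) x) by (intros; auto). ring. }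
  intros w Hw. split; auto. split; [apply in_conv_vertex; auto|].
  assert (Hnn : forall w, In w S -> 0 <= c w * dot d q x - c w * dot d q w).
  { intros w' Hw'. pose proof (Hc w' Hw'). pose proof (hq w' (HSA w' Hw')) as Hq'.
    unfold vsub in Hq'. rewrite dot_subr in Hq'. nra. }
  pose proof (sumR_eq0_ge0 S _ Hnn Hsum w Hw) as E. pose proof (Hc w Hw).
  unfold vsub. rewrite dot_subr.
  assert (Hprod : c w * (dot d q w - dot d q x) = 0) by lra.
  apply Rmult_integral in Hprod. lra.
Qed.

Lemma contact_cone p : in_gen_cone (cone_gens A x) p -> dot d q p = 0 -> nonzero d p ->
  in_cone contact x p.
Proof.
  intros Hp Hqp Hnz. destruct (in_gen_cone_conv d A x p Hp Hnz) as [t [Ht Hy]].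
  exists [fun i => x i + t * p i], (fun _ => / t). split.
  - intros k [<-|[]]. split; [|left; apply Rinv_0_lt_compat; auto]. split; auto.
    unfold vsub. rewrite (dot_ext d q q _ (fun i => t * p i)), dot_scaler, Hqp
      by (intros; auto; ring).
    ring.
  - intros i. simpl. field. lra.
Qed.

End ContactFace.

(** * Directional and pyramidal width *)

Definition dir_gap (d : nat) (r s v : vec) : R := dot d (vscale (/ norm d r) r) (vsub s v).

Definition gap_max_is (d : nat) (B : vec -> Prop) (r : vec) (S : list vec) (m : R) : Prop :=
  is_max_of (fun y => exists s v, B s /\ In v S /\ y = dir_gap d r s v) m.

Section DirectionalWidth.
Variables (d : nat) (A : list vec) (B : vec -> Prop) (r x : vec).
Hypothesis hBA : forall s, B s -> In s A.

Lemma gap_max_exists S : Sx B x S ->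
  exists s v, B s /\ In v S /\ gap_max_is d B r S (dir_gap d r s v).
Proof.
  intros [HSB [_ [c [_ [Hs _]]]]].
  destruct S as [|w S]; [cbn in Hs; lra|].
  destruct (list_argmin (list_prod A (w :: S)) (fun pr => B (fst pr))
              (fun pr => - dir_gap d r (fst pr) (snd pr))) as [[s v] [Hpr1 [Hpr2 Hpr3]]].
  { assert (Hw : B w) by (apply HSB; simpl; auto).
    exists (w, w). split; [apply in_prod; simpl; auto|exact Hw]. }
  apply in_prod_iff in Hpr1. destruct Hpr1 as [_ Hv].
  exists s, v. split; auto. split; auto. split; [exists s, v; auto|].
  intros y [s' [v' [Hs' [Hv' ->]]]].
  assert (- dir_gap d r s v <= - dir_gap d r s' v')
    by (apply (Hpr3 (s', v')); auto; apply in_prod; auto).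
  lra.
Qed.

Lemma PdirW_exists_le S M : Sx B x S ->
  (forall s v, B s -> In v S -> dir_gap d r s v <= M) ->
  exists w, PdirW_is d B r x w /\ w <= M.
Proof.
  intros HS HM.
  set (P := fun t => exists S, Sx B x S /\ gap_max_is d B r S t).
  destruct (gap_max_exists S HS) as [s0 [v0 [Hs0 [Hv0 Hm0]]]].
  destruct (list_argmin (list_prod A A) (fun pr => P (dir_gap d r (fst pr) (snd pr)))
              (fun pr => dir_gap d r (fst pr) (snd pr))) as [[s1 v1] [_ [HP1 Hmin]]].
  { exists (s0, v0). split; [apply in_prod; auto; apply hBA, HS; auto|exists S; auto]. }
  assert (Hlow : forall t, P t -> dir_gap d r s1 v1 <= t).
  { intros t [S' [HS' [[s' [v' [Hs' [Hv' ->]]]] Hmax]]].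
    apply (Hmin (s', v')); [apply in_prod; auto; apply hBA, HS'; auto|].
    exists S'. split; auto. split; [exists s', v'; auto|auto]. }
  exists (dir_gap d r s1 v1). split; [split; [exact HP1|exact Hlow]|].
  apply Rle_trans with (dir_gap d r s0 v0); [apply Hlow; exists S; auto|auto].
Qed.

End DirectionalWidth.

Lemma PWidth_set_nonneg d A t : PWidth_set d A t -> 0 <= t.
Proof.
  intros [K [x [r [_ [_ [_ [_ [_ [[S [[HSB HS] Hmax]] _]]]]]]]]].
  destruct HS as [_ [c [_ [Hs _]]]]. destruct S as [|w S]; [cbn in Hs; lra|].
  replace 0 with (dot d (vscale (/ norm d r) r) (vsub w w))
    by (rewrite dot_comm; apply dot_vanish; intros; unfold vsub; ring).
  apply Hmax. exists w, w. split; [apply HSB|]; simpl; auto.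
Qed.

Lemma cone_moreau d (Gs : list vec) (b : vec) : exists p, in_gen_cone Gs p /\
  (forall u, In u Gs -> dot d (fun i => b i - p i) u <= 0) /\ dot d (fun i => b i - p i) p = 0.
Proof.
  destruct (cone_proj_exists d b Gs) as [p [Hpc Hpm]].
  exists p. split; [auto|split].
  - apply (cone_proj_normal d b Gs p); auto.
  - apply (cone_proj_orth d b Gs p); auto.
Qed.

Lemma nsq_pos_nonzero d p : 0 < nsq d p -> nonzero d p.
Proof.
  intros Hpp. apply NNPP. intros Hn.
  assert (Hz : nsq d p = 0).
  { apply dot_vanish. intros i Hi. apply NNPP. intros Hpi. apply Hn. exists i. auto. }
  lra.
Qed.

Lemma PWidth_set_le_contact d A q x p S M :
  in_conv A x -> Sx (fun b => In b A) x S ->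
  (forall a, In a A -> dot d q (vsub a x) <= 0) ->
  in_gen_cone (cone_gens A x) p -> dot d q p = 0 -> nonzero d p ->
  (forall s v, In s A /\ contact d A q x s -> In v S -> dir_gap d p s v <= M) ->
  exists t, PWidth_set d A t /\ t <= M.
Proof.
  intros Hx HS Hq Hp Hqp Hnz HM.
  destruct (PdirW_exists_le d A _ p x (fun s Hs => proj1 Hs) S M
              (Sx_contact d A q x Hq S HS) HM) as [t [Ht Htle]].
  exists t. split; auto.
  exists (contact d A q x), x, p. split; [apply contact_face; auto|].
  split; [exists x; apply contact_base; auto|].
  split; [apply contact_base; auto|].
  split; [apply contact_cone; auto|]. split; auto.
Qed.

Lemma PWidth_witness d A G x xs s v S :
  in_conv A x -> in_conv A xs -> Sx (fun b => In b A) x S ->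
  (forall a, In a A -> dot d G s <= dot d G a) ->
  (forall w, In w S -> dot d G w <= dot d G v) ->
  dot d G (vsub xs x) < 0 ->
  exists t, PWidth_set d A t /\
    t * dot d (vopp G) (vsub xs x) <= (dot d G v - dot d G s) * norm d (vsub xs x).
Proof.
  intros Hx Hxs HS Hs Hv Hneg.
  set (b := vopp G). set (e := vsub xs x) in *.
  destruct (cone_moreau d (cone_gens A x) b) as [p [Hpc [Hqn Hqp]]].
  set (q := fun i => b i - p i) in *.
  assert (Hq : forall a, In a A -> dot d q (vsub a x) <= 0)
    by (intros a Ha; exact (Hqn _ (in_map _ A a Ha))).
  assert (Hce : dot d b e <= dot d p e).
  { rewrite (dot_ext d b (fun i => p i + q i) e e), dot_addl by (intros; unfold q; auto; ring).
    pose proof (in_conv_dir_nonpos d A q x Hq xs Hxs) as Hqe. fold e in Hqe. lra. }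
  assert (Hc0 : 0 < dot d b e) by (unfold b, vopp; rewrite dot_oppl; lra).
  assert (Hpp : 0 < nsq d p).
  { destruct (dot_self_ge0 d p) as [|E]; auto. symmetry in E.
    rewrite (dot_self_eq0 d p E) in Hce. lra. }
  set (np := norm d p). assert (Hnp : 0 < np) by (apply sqrt_lt_R0, Hpp).
  destruct (PWidth_set_le_contact d A q x p S (/ np * (dot d G v - dot d G s)))
    as [t [HtW Htle]]; auto using nsq_pos_nonzero.
  { intros s0 v0 [Hs0 HKs0] Hv0.
    assert (HKv0 : In v0 A /\ contact d A q x v0) by (apply (Sx_contact d A q x Hq S HS); auto).
    unfold dir_gap, vscale. rewrite dot_scalel. fold np.
    apply Rmult_le_compat_l; [left; apply Rinv_0_lt_compat; auto|].
    rewrite (dot_ext d p (fun i => b i - q i) (vsub s0 v0) (vsub s0 v0)), dot_subl,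
      (contact_dot_vsub d A q x s0 v0 HKs0 (proj2 HKv0)) by (intros; unfold q; auto; ring).
    unfold b, vopp, vsub. rewrite dot_oppl, dot_subr.
    pose proof (Hs s0 Hs0). pose proof (Hv v0 Hv0). lra. }
  exists t. split; auto.
  pose proof (PWidth_set_nonneg d A t HtW) as Ht0.
  pose proof (dot_le_norm_mul d p e) as HCS. fold np in HCS.
  apply Rle_trans with (t * (np * norm d e)); [apply Rmult_le_compat_l; lra|].
  apply Rle_trans with (/ np * (dot d G v - dot d G s) * (np * norm d e)).
  - apply Rmult_le_compat_r; auto. apply Rmult_le_pos; [lra|apply sqrt_pos].
  - right. field. lra.
Qed.

Lemma mu_width_sq_le mu W t c0 de ne F :
  0 <= mu -> 0 <= W -> W <= t -> 0 < c0 -> 0 < de -> t * c0 <= de * ne ->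
  F >= mu / 2 * ne ^ 2 -> mu * W ^ 2 <= 2 / (c0 / de) ^ 2 * F.
Proof.
  intros Hmu HW HWt Hc0 Hde Hb HF.
  assert (HWc : 0 <= W * c0 <= de * ne) by (split; nra).
  assert (Hsq : (W * c0) ^ 2 <= (de * ne) ^ 2) by (apply pow_incr; lra).
  replace (2 / (c0 / de) ^ 2 * F) with (2 * de ^ 2 * F / c0 ^ 2) by (field; lra).
  apply Rmult_le_reg_r with (c0 ^ 2); [apply pow_lt; lra|].
  replace (2 * de ^ 2 * F / c0 ^ 2 * c0 ^ 2) with (2 * de ^ 2 * F) by (field; lra).
  assert (mu * (W * c0) ^ 2 <= mu * (de * ne) ^ 2) by (apply Rmult_le_compat_l; auto).
  assert (de ^ 2 * (mu * ne ^ 2) <= de ^ 2 * (2 * F)) by (apply Rmult_le_compat_l; [nra|lra]).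
  nra.
Qed.

Theorem mainTheorem8 (d : nat) (A : list vec) (f : vec -> R) (g : vec -> vec) (mu : R)
  (hA : A <> nil) (hAd : forall a, In a A -> inRd d a)
  (U : vec -> Prop) (hUo : open_Rd d U) (hUc : convex_set U)
  (hDU : forall x, in_conv A x -> U x)
  (hconv : convex_on U f) (hdiff : has_gradient_on d U f g)
  (hmu : 0 <= mu)
  (hsc : forall x y, in_conv A x -> in_conv A y ->
           f y - f x - dot d (g x) (vsub y x) >= mu / 2 * (norm d (vsub y x)) ^ 2) :
  forall W, is_inf (PWidth_set d A) W ->
  forall y, muA_set d A f g y -> mu * W ^ 2 <= y.
Proof.
  intros W [HWle HWge] y [x [xs [s [v [Hx [Hxs [Hneg [[_ Hs] [[[S [HS [_ Hv]]] _] ->]]]]]]]]].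
  destruct (PWidth_witness d A (g x) x xs s v S Hx Hxs HS Hs Hv Hneg) as [t [Ht Hbound]].
  assert (Hsxs : dot d (g x) s <= dot d (g x) xs) by (apply (in_conv_dot_ge d A); auto).
  assert (Hxv : dot d (g x) x <= dot d (g x) v)
    by (apply (Sx_dot_le d (fun b => In b A) x S); auto).
  unfold vsub in Hneg. rewrite dot_subr in Hneg.
  assert (Hgam : gammaA d (g x) x xs s v =
                   dot d (vopp (g x)) (vsub xs x) / (dot d (g x) v - dot d (g x) s))
    by (unfold gammaA; f_equal; unfold vopp, vsub; rewrite dot_oppl, dot_subr; ring).
  rewrite Hgam.
  apply mu_width_sq_le with (t := t) (ne := norm d (vsub xs x)); auto.
  - apply HWge. intros; apply (PWidth_set_nonneg d A); auto.
  - unfold vopp, vsub. rewrite dot_oppl, dot_subr. lra.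
  - lra.
Qed.
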